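(* Let $T$ be a bounded linear operator on a complex separable infinite-dimensional Hilbert space $\mathcal{H}$ admitting a $\mathbb{T}$-eigenvector field $E$ which is $\alpha$-H\''olderian for some $\alpha\in(0,1]$, and let $R$ be the operator defined from $E$ in the context. There exists a positive constant $C(E,\alpha)$ depending only on $E$ and $\alpha$ such that for all $x,y\in\mathcal{H}$, $$|\langle RT^{*n}x,y\rangle|\le\frac{C(E,\alpha)\,\|x\|\,\|y\|}{n^{\alpha}}$$ for every positive integer $n$.
   Context: The inner product is linear in the second variable, conjugate-linear in the first. $\mathbb{T}$ is the unit circle, $\mu$ normalized Lebesgue measure. A $\mathbb{T}$-eigenvector field is a bounded map $E:\mathbb{T}\to\mathcal{H}$ with $TE(\lambda)=\lambda E(\lambda)$ for all $\lambda$; it is $\alpha$-H\''olderian if there is $C(E)>0$ with $\|E(e^{i\theta})-E(e^{i\theta'})\|\le C(E)|\theta-\theta'|^{\alpha}$ for all $\theta,\theta'\in[0,2\pi)$. $K:L^2(\mathbb{T},\mu)\to\mathcal{H}$, $Kf=\int f(\lambda)E(\lambda)\,d\mu(\lambda)$, and $R=KK^*$; equivalently $\langle RT^{*n}x,y\rangle=\int_{\mathbb{T}}\lambda^n\langle x,E(\lambda)\rangle\overline{\langle y,E(\lambda)\rangle}\,d\mu(\lambda)$. *)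

From HB Require Import structures.
From mathcomp Require Import all_boot all_order all_algebra.
From mathcomp Require Import all_classical all_reals all_analysis.
From mathcomp Require Import complex.

Set Implicit Arguments.
Unset Strict Implicit.
Unset Printing Implicit Defensive.
Import Order.TTheory GRing.Theory Num.Theory.
Local Open Scope ring_scope.
Local Open Scope complex_scope.

Section Defs.
Variable R : realType.
Local Notation C := R[i].

Definition cmod (z : C) : R := Num.sqrt (complex.Re z ^+ 2 + complex.Im z ^+ 2).

Definition expi (t : R) : C := cos t +i* sin t.

(* inner-product-space structure on an abstract complex vector space H;
   the inner product is conjugate-linear in the first variable and
   linear in the second one. *)
Variable H : lmodType C.

Definition is_inner_product (ip : H -> H -> C) : Prop :=
  [/\ (forall x y z : H, forall a : C, ip x (a *: y + z) = a * ip x y + ip x z),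
      (forall x y : H, ip y x = conjc (ip x y)),
      (forall x : H, complex.Im (ip x x) = 0 /\ 0 <= complex.Re (ip x x)) &
      (forall x : H, ip x x = 0 -> x = 0)].

Definition hnorm (ip : H -> H -> C) (x : H) : R := Num.sqrt (complex.Re (ip x x)).

Definition ip_complete (ip : H -> H -> C) : Prop :=
  forall u : nat -> H,
    (forall e : R, 0 < e -> exists N : nat, forall m n : nat,
        (N <= m)%N -> (N <= n)%N -> hnorm ip (u m - u n) < e) ->
    exists l : H, forall e : R, 0 < e -> exists N : nat, forall n : nat,
        (N <= n)%N -> hnorm ip (u n - l) < e.

Definition ip_separable (ip : H -> H -> C) : Prop :=
  exists d : nat -> H, forall (x : H) (e : R), 0 < e ->
    exists n : nat, hnorm ip (x - d n) < e.

Definition infinite_dimensional : Prop :=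
  forall n : nat, exists v : 'I_n -> H,
    forall c : 'I_n -> C, \sum_(i < n) c i *: v i = 0 -> forall i, c i = 0.

Definition separable_inf_dim_hilbert (ip : H -> H -> C) : Prop :=
  [/\ is_inner_product ip, ip_complete ip, ip_separable ip & infinite_dimensional].

Definition bounded_linear (ip : H -> H -> C) (T : H -> H) : Prop :=
  linear T /\ exists M : R, forall x : H, hnorm ip (T x) <= M * hnorm ip x.

Definition is_adjoint (ip : H -> H -> C) (T Tstar : H -> H) : Prop :=
  forall x y : H, ip (T x) y = ip x (Tstar y).

Definition unit_circle : set C := [set l | cmod l = 1].

Definition T_eigenvector_field (ip : H -> H -> C) (T : H -> H) (E : C -> H) : Prop :=
  (exists M : R, forall l, unit_circle l -> hnorm ip (E l) <= M) /\
  (forall l, unit_circle l -> T (E l) = l *: E l).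

Definition holderian (ip : H -> H -> C) (E : C -> H) (alpha : R) : Prop :=
  exists CE : R, 0 < CE /\
    forall t t' : R, 0 <= t < 2 * pi -> 0 <= t' < 2 * pi ->
      hnorm ip (E (expi t) - E (expi t')) <= CE * `|t - t'| `^ alpha.

End Defs.

(* integral of a complex-valued function on the unit circle with respect to
   normalized Lebesgue measure mu, parametrized by lambda = e^{i theta},
   theta in [0, 2pi), computed on real and imaginary parts *)
Definition circle_integral (R : realType) (f : R[i] -> R[i]) : R[i] :=
  ((2 * pi)^-1 * \int[lebesgue_measure]_(t in `[0, 2 * pi[%classic) complex.Re (f (expi t)))
  +i* ((2 * pi)^-1 * \int[lebesgue_measure]_(t in `[0, 2 * pi[%classic) complex.Im (f (expi t))).

(* R = K K^*, where K f = \int f(l) E(l) dmu(l): characterized (weakly) by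
   <R z, y> = \int <z, E(l)> conj <y, E(l)> dmu(l)  for all z, y. *)
Definition is_KKstar (R : realType) (H : lmodType R[i]) (ip : H -> H -> R[i])
    (E : R[i] -> H) (Rop : H -> H) : Prop :=
  linear Rop /\
  forall z y : H,
    ip (Rop z) y = circle_integral (fun l => ip z (E l) * conjc (ip y (E l))).

(* Since T E(l) = l E(l), we have <T*^n x, E(l)> = l^n <x, E(l)>, so <R T*^n x, y> is the
   Fourier coefficient (2 pi)^-1 \int_0^{2 pi} e^{int} G(t) dt of
   G(t) = <x, E(e^{it})> conj <y, E(e^{it})>, and Cauchy-Schwarz makes G alpha-Hoelderian with
   constant K = 2 sup |E| C(E) |x| |y|.  Cut [0, 2 pi) into the n periods of e^{int}: on each
   one the exponential integrates to 0, so G can be replaced by G minus its value at the left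
   end point, which is at most K (2 pi / n)^alpha there. *)

From HB Require Import structures.
From mathcomp Require Import all_boot all_order all_algebra.
From mathcomp Require Import all_classical all_reals all_analysis.
From mathcomp Require Import complex measurable_realfun ring lra.
Import Order.TTheory GRing.Theory Num.Theory.
Import numFieldNormedType.Exports.

Set Implicit Arguments.
Unset Strict Implicit.
Unset Printing Implicit Defensive.

Local Open Scope ring_scope.

Section HolderIntegrals.
Local Open Scope classical_set_scope.
Variable R : realType.
Notation mu := (@lebesgue_measure R).

Definition holder_on (D : set R) (g : R -> R) (K a : R) :=
  forall t s, D t -> D s -> `|g t - g s| <= K * `|t - s| `^ a.

Lemma holder_onS (D D' : set R) (g : R -> R) (K a : R) :
  D' `<=` D -> holder_on D g K a -> holder_on D' g K a.
Proof. by move=> DD' hg t s /DD' Dt /DD' Ds; exact: hg. Qed.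

Lemma holder_continuous (D : set R) (g : R -> R) (K a : R) : 0 < a ->
  holder_on D g K a -> {within D, continuous g}.
Proof.
move=> a0 hg; apply/subspace_continuousP => x Dx.
apply/cvgrPdist_lt => e e0.
have K1 : 0 < `|K| + 1 by rewrite ltr_wpDl.
pose d := (e / (`|K| + 1)) `^ a^-1.
have d0 : 0 < d by rewrite powR_gt0 // divr_gt0.
apply/nbhs_ballP; exists d => // t /= xt Dt.
rewrite -ball_normE /= in xt.
apply: (le_lt_trans (hg x t Dx Dt)).
have xt_a : `|x - t| `^ a < e / (`|K| + 1).
  have -> : e / (`|K| + 1) = d `^ a.
    by rewrite /d -powRrM mulVf ?gt_eqF // powRr1 // ltW // divr_gt0.
  by apply: gt0_ltr_powR => //; rewrite nnegrE ltW.
apply: (le_lt_trans (ler_wpM2r (powR_ge0 _ _) (ler_norm K))).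
apply: (le_lt_trans (ler_wpM2l (normr_ge0 K) (ltW xt_a))).
by rewrite mulrA ltr_pdivrMr // mulrDr mulr1 mulrC ltrDl.
Qed.

Lemma holder_itv_le (u v : R) (g : R -> R) (K a : R) : 0 <= a -> 0 <= K ->
  holder_on `[u, v[ g K a ->
  forall t, u <= t < v -> `|g t - g u| <= K * (v - u) `^ a.
Proof.
move=> a0 K0 hg t /andP[ut tv].
have gtu := hg t u; rewrite /= !in_itv /= ut tv lexx (le_lt_trans ut tv) in gtu.
apply: (le_trans (gtu isT isT)); apply: ler_wpM2l => //.
by apply: ge0_ler_powR; rewrite ?nnegrE ?subr_ge0 ?(ltW (le_lt_trans ut tv)) //
  ger0_norm ?subr_ge0 // lerD2r ltW.
Qed.

Lemma holder_bounded (u v : R) (g : R -> R) (K a : R) : 0 <= a -> 0 <= K ->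
  holder_on `[u, v[ g K a ->
  forall t, u <= t < v -> `|g t| <= `|g u| + K * (v - u) `^ a.
Proof.
move=> a0 K0 hg t tuv; rewrite -[g t](subrK (g u)) addrC.
by rewrite (le_trans (ler_normD _ _)) // lerD2l holder_itv_le.
Qed.

Lemma bounded_measurable_integrable (u v : R) (g : R -> R) (M : R) :
  measurable_fun `[u, v[ g -> (forall t, u <= t < v -> `|g t| <= M) ->
  mu.-integrable `[u, v[ (EFin \o g).
Proof.
move=> mg bg; apply: measurable_bounded_integrable => //.
- have := lebesgue_measure_itv `[u, v[%R; rewrite /= => ->.
  by case: ifP => _ //=; rewrite ltry.
- rewrite /bounded_near; near=> N.
  have MN : M <= N by near: N; apply: nbhs_pinfty_ge; exact: num_real.
  by move=> x /= ux; apply: le_trans (bg x _) MN.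
Unshelve. all: by end_near. Qed.

Lemma continuous_integrable (u v : R) (g : R -> R) : continuous g ->
  mu.-integrable `[u, v[ (EFin \o g).
Proof.
move=> cg; have iuv : mu.-integrable `[u, v] (EFin \o g).
  by apply: continuous_compact_integrable;
    [exact: segment_compact | exact: continuous_subspaceT].
by apply: integrableS iuv => //; apply: subset_itvl; rewrite bnd_simp.
Qed.

Lemma Rintegral_itv_le (u v : R) (g : R -> R) (M : R) : u <= v ->
  mu.-integrable `[u, v[ (EFin \o g) ->
  (forall t, u <= t < v -> `|g t| <= M) ->
  `|\int[mu]_(t in `[u, v[) g t| <= M * (v - u).
Proof.
move=> uv ig bg; apply: (le_trans (le_normr_Rintegral _ ig)) => //.
have mu_uv : fine (mu `[u, v[) = v - u.
  have := lebesgue_measure_itv `[u, v[%R; rewrite /= => ->; rewrite lte_fin.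
  by case: ltgtP uv => // -> _; rewrite subrr.
rewrite -mu_uv -Rintegral_cst //.
apply: le_Rintegral => //.
- exact: integrable_norm.
- by apply: continuous_integrable => x; exact: cvg_cst.
Qed.

Lemma Rintegral_itv_derive (f F : R -> R) (u v : R) : u < v -> continuous f ->
  (forall x : R, is_derive x 1 F (f x)) -> \int[mu]_(t in `[u, v[) f t = F v - F u.
Proof.
move=> uv cf dF.
have cF : continuous F.
  by move=> x; apply/differentiable_continuous/derivable1_diffP; have [] := dF x.
have iuv : mu.-integrable `[u, v] (EFin \o f).
  by apply: continuous_compact_integrable;
    [exact: segment_compact | exact: continuous_subspaceT].
rewrite Rintegral_itv_bndo_bndc; last first.
  by apply: integrableS iuv => //; apply: subset_itvl; rewrite bnd_simp.
rewrite /Rintegral (@continuous_FTC2 _ f F _ _ uv (continuous_subspaceT cf)) //.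
- split; last 2 first.
  + exact: cvg_at_right_filter (cF u).
  + exact: cvg_at_left_filter (cF v).
  by move=> x _; have [] := dF x.
- by move=> x _; rewrite derive1E derive_val.
Qed.

Lemma continuous_cosM (c : R) : continuous (fun t => cos (c * t)).
Proof.
move=> x; apply: continuous_comp; last exact: continuous_cos.
by apply: continuousM; [exact: cvg_cst | exact: cvg_id].
Qed.

Lemma continuous_sinM (c : R) : continuous (fun t => sin (c * t)).
Proof.
move=> x; apply: continuous_comp; last exact: continuous_sin.
by apply: continuousM; [exact: cvg_cst | exact: cvg_id].
Qed.

Lemma Rintegral_cos_period (c u : R) : 0 < c ->
  \int[mu]_(t in `[u, u + 2 * pi / c[) cos (c * t) = 0.
Proof.
move=> c0; have c0' : c != 0 by rewrite gt_eqF.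
have dsin (x : R) : is_derive x 1 (fun t => c^-1 * sin (c * t)) (cos (c * x)).
  have -> : (fun t => c^-1 * sin (c * t)) = c^-1 *: (sin \o *%R c) by [].
  apply: is_derive_eq.
  by rewrite -[LHS]/(c^-1 * (cos (c * x) * (c * 1))) mulr1 mulrCA mulVf ?mulr1.
rewrite (@Rintegral_itv_derive _ _ u (u + 2 * pi / c) _ _ dsin).
- have -> : c * (u + 2 * pi / c) = c * u + pi *+ 2.
    by rewrite mulrDr mulrCA mulfV // mulr1 mulr_natl.
  by rewrite sinD2pi subrr.
- by rewrite ltrDl divr_gt0 // mulr_gt0 // pi_gt0.
- exact: continuous_cosM.
Qed.

Lemma Rintegral_sin_period (c u : R) : 0 < c ->
  \int[mu]_(t in `[u, u + 2 * pi / c[) sin (c * t) = 0.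
Proof.
move=> c0; have c0' : c != 0 by rewrite gt_eqF.
have dcos (x : R) : is_derive x 1 (fun t => - c^-1 * cos (c * t)) (sin (c * x)).
  have -> : (fun t => - c^-1 * cos (c * t)) = - c^-1 *: (cos \o *%R c) by [].
  apply: is_derive_eq.
  by rewrite -[LHS]/(- c^-1 * (- sin (c * x) * (c * 1))) mulr1 !mulNr mulrN opprK
    mulrCA mulVf ?mulr1.
rewrite (@Rintegral_itv_derive _ _ u (u + 2 * pi / c) _ _ dcos).
- have -> : c * (u + 2 * pi / c) = c * u + pi *+ 2.
    by rewrite mulrDr mulrCA mulfV // mulr1 mulr_natl.
  by rewrite cosD2pi subrr.
- by rewrite ltrDl divr_gt0 // mulr_gt0 // pi_gt0.
- exact: continuous_sinM.
Qed.

Lemma Rintegral_itv_partition (h : R -> R) (d : R) (m : nat) : 0 < d ->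
  mu.-integrable `[0, m%:R * d[ (EFin \o h) ->
  \int[mu]_(t in `[0, m%:R * d[) h t =
    \sum_(k < m) \int[mu]_(t in `[k%:R * d, k%:R * d + d[) h t.
Proof.
move=> d0; elim: m => [_|m IH ih].
  by rewrite big_ord0 mul0r set_itv_ge ?Rintegral_set0 // bnd_simp ltxx.
have md0 : 0 <= m%:R * d by rewrite mulr_ge0 // ltW.
have split_itv : `[0, m.+1%:R * d[ = `[0, m%:R * d[ `|` `[m%:R * d, m%:R * d + d[.
  rewrite -[m.+1%:R]natr1 mulrDl mul1r.
  by apply: itv_bndbnd_setU; rewrite bnd_simp // lerDl ltW.
rewrite big_ord_recr /= -IH; last first.
  by apply: integrableS ih => //; rewrite split_itv; exact: subsetUl.
rewrite split_itv Rintegral_setU //; first by rewrite -split_itv.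
apply/disj_setPS => x [] /=; rewrite !in_itv /= => /andP[_ x1] /andP[x2 _].
by move: (lt_le_trans x1 x2); rewrite ltxx.
Qed.

End HolderIntegrals.

Section OscillatoryIntegrals.
Local Open Scope classical_set_scope.
Variable R : realType.
Notation mu := (@lebesgue_measure R).
Variables (A B : R -> R) (K a : R).
Hypotheses (a_gt0 : 0 < a) (K_ge0 : 0 <= K).

(* [re_expi_mul c t] is [Re (e^{ict} (A t + i B t))]. *)
Definition re_expi_mul (c t : R) := cos (c * t) * A t - sin (c * t) * B t.

Lemma re_expi_mul_integrable (c u v : R) :
  holder_on `[u, v[ A K a -> holder_on `[u, v[ B K a ->
  mu.-integrable `[u, v[ (EFin \o re_expi_mul c).
Proof.
move=> hA hB.
have mholder (g : R -> R) : holder_on `[u, v[ g K a -> measurable_fun `[u, v[ g.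
  move=> hg; apply: subspace_continuous_measurable_fun => //.
  exact: holder_continuous hg.
have mcont (g : R -> R) : continuous g -> measurable_fun `[u, v[ g.
  by move=> cg; apply: measurable_funS (continuous_measurable_fun cg).
apply: (@bounded_measurable_integrable _ _ _ _
  ((`|A u| + K * (v - u) `^ a) + (`|B u| + K * (v - u) `^ a))).
  apply: measurable_funB; apply: measurable_funM;
    by [apply: mcont; exact: continuous_cosM | apply: mcont; exact: continuous_sinM
       | exact: mholder].
move=> t tuv; rewrite /re_expi_mul; apply: (le_trans (ler_normB _ _)).
apply: lerD; rewrite normrM.
- apply: (le_trans (ler_wpM2r (normr_ge0 _) (cos_max _))).
  by rewrite mul1r holder_bounded // ltW.
- apply: (le_trans (ler_wpM2r (normr_ge0 _) (sin_max _))).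
  by rewrite mul1r holder_bounded // ltW.
Qed.

Lemma re_expi_mul_period_le (c u : R) : 0 < c ->
  holder_on `[u, u + 2 * pi / c[ A K a -> holder_on `[u, u + 2 * pi / c[ B K a ->
  `|\int[mu]_(t in `[u, u + 2 * pi / c[) re_expi_mul c t|
    <= 2 * K * (2 * pi / c) `^ a * (2 * pi / c).
Proof.
move=> c0 hA hB; set d := 2 * pi / c.
have d0 : 0 < d by rewrite divr_gt0 // mulr_gt0 // pi_gt0.
have icosM (b : R) : mu.-integrable `[u, u + d[ (EFin \o (fun t => b * cos (c * t))).
  apply: continuous_integrable => x.
  by apply: continuousM; [exact: cvg_cst | exact: continuous_cosM].
have isinM (b : R) : mu.-integrable `[u, u + d[ (EFin \o (fun t => b * sin (c * t))).
  apply: continuous_integrable => x.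
  by apply: continuousM; [exact: cvg_cst | exact: continuous_sinM].
pose frozen t := A u * cos (c * t) - B u * sin (c * t).
have frozen0 : \int[mu]_(t in `[u, u + d[) frozen t = 0.
  rewrite RintegralB ?RintegralZl ?Rintegral_cos_period ?Rintegral_sin_period //;
    first by rewrite !mulr0 subrr.
  - by apply: continuous_integrable; exact: continuous_sinM.
  - by apply: continuous_integrable; exact: continuous_cosM.
have iosc := re_expi_mul_integrable c hA hB.
have ifrozen : mu.-integrable `[u, u + d[ (EFin \o frozen).
  by apply: eq_integrable (integrableB _ (icosM (A u)) (isinM (B u))) => // x _ /=.
have := RintegralB _ iosc ifrozen; rewrite frozen0 subr0 => <- //.
apply: le_trans (Rintegral_itv_le (M := 2 * K * d `^ a) _ _ _) _.
- by rewrite lerDl ltW.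
- by apply: eq_integrable (integrableB _ iosc ifrozen) => // x _ /=; rewrite -EFinB.
- move=> t tud.
  have holder_dist (g : R -> R) :
      holder_on `[u, u + d[ g K a -> `|g t - g u| <= K * d `^ a.
    move=> hg; have := holder_itv_le (ltW a_gt0) K_ge0 hg tud.
    by rewrite addrAC subrr add0r.
  have -> : re_expi_mul c t - frozen t =
      cos (c * t) * (A t - A u) - sin (c * t) * (B t - B u).
    by rewrite /re_expi_mul /frozen; ring.
  rewrite (le_trans (ler_normB _ _)) // !normrM -mulrA mulr_natl mulr2n.
  apply: lerD.
  + apply: (le_trans (ler_wpM2r (normr_ge0 _) (cos_max _))).
    by rewrite mul1r holder_dist.
  + apply: (le_trans (ler_wpM2r (normr_ge0 _) (sin_max _))).
    by rewrite mul1r holder_dist.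
- by rewrite addrAC subrr add0r.
Qed.

Lemma re_expi_mul_le (n : nat) : (0 < n)%N ->
  holder_on `[0, 2 * pi[ A K a -> holder_on `[0, 2 * pi[ B K a ->
  `|\int[mu]_(t in `[0, 2 * pi[) re_expi_mul n%:R t|
    <= 2 * K * (2 * pi) * (2 * pi / n%:R) `^ a.
Proof.
move=> n0 hA hB; pose d : R := 2 * pi / n%:R.
have n0' : (0 : R) < n%:R by rewrite ltr0n.
have d0 : 0 < d by rewrite divr_gt0 // mulr_gt0 // pi_gt0.
rewrite (_ : 2 * pi = n%:R * d) in hA hB *; last first.
  by rewrite /d mulrCA mulfV ?gt_eqF // mulr1.
rewrite Rintegral_itv_partition //; last exact: re_expi_mul_integrable.
apply: (le_trans (ler_norm_sum _ _ _)).
apply: (@le_trans _ _ (\sum_(k < n) (2 * K * d `^ a * d))).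
  apply: ler_sum => k _.
  have sub_k : `[k%:R * d, k%:R * d + d[ `<=` `[0, n%:R * d[.
    have -> : k%:R * d + d = k.+1%:R * d by rewrite -natr1 mulrDl mul1r.
    apply: subset_itv; rewrite bnd_simp.
    - by rewrite mulr_ge0 // ltW.
    - by rewrite ler_pM2r // ler_nat ltn_ord.
  exact: (re_expi_mul_period_le (u := k%:R * d) n0'
    (holder_onS sub_k hA) (holder_onS sub_k hB)).
have -> : n%:R * d / n%:R = d by rewrite mulrAC mulfV ?gt_eqF // mul1r.
by rewrite sumr_const card_ord -mulr_natr; lra.
Qed.

End OscillatoryIntegrals.

Section ComplexModulus.
Local Open Scope complex_scope.
Variable R : realType.
Local Notation C := R[i].

Lemma cmod_normc (z : C) : cmod z = ComplexField.Normc.normc z.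
Proof. by case: z. Qed.

Lemma cmod_ge0 (z : C) : 0 <= cmod z.
Proof. exact: sqrtr_ge0. Qed.

Lemma cmodM (z w : C) : cmod (z * w) = cmod z * cmod w.
Proof. by rewrite !cmod_normc ComplexField.Normc.normcM. Qed.

Lemma cmodD (z w : C) : cmod (z + w) <= cmod z + cmod w.
Proof. by rewrite !cmod_normc le_normcD. Qed.

Lemma cmodJ (z : C) : cmod (conjc z) = cmod z.
Proof. by case: z => a b; rewrite /cmod /= sqrrN. Qed.

Lemma cmod_sqr (z : C) : cmod z ^+ 2 = complex.Re z ^+ 2 + complex.Im z ^+ 2.
Proof. by rewrite sqr_sqrtr // addr_ge0 // sqr_ge0. Qed.

Lemma normr_Re_le (z : C) : `|complex.Re z| <= cmod z.
Proof.
rewrite -ler_sqr ?nnegrE ?cmod_ge0 //.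
by rewrite cmod_sqr real_normK ?num_real // lerDl sqr_ge0.
Qed.

Lemma normr_Im_le (z : C) : `|complex.Im z| <= cmod z.
Proof.
rewrite -ler_sqr ?nnegrE ?cmod_ge0 //.
by rewrite cmod_sqr real_normK ?num_real // lerDr sqr_ge0.
Qed.

Lemma cmod_le_normD (a b : R) : cmod (a +i* b) <= `|a| + `|b|.
Proof.
rewrite -ler_sqr ?nnegrE ?cmod_ge0 ?addr_ge0 //.
rewrite cmod_sqr /= sqrrD -(real_normK (num_real a)) -(real_normK (num_real b)).
by rewrite -addrA lerD2l lerDr mulrn_wge0 // mulr_ge0.
Qed.

Lemma expi_unit_circle (t : R) : unit_circle (expi t).
Proof. by rewrite /unit_circle /cmod /= cos2Dsin2 sqrtr1. Qed.

Lemma expiX (t : R) (n : nat) : expi t ^+ n = expi (n%:R * t).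
Proof.
elim: n => [|n IH]; first by rewrite expr0 mul0r /expi cos0 sin0.
rewrite exprS IH /expi -addn1 natrD mulrDl mul1r cosD sinD.
by apply/eqP; rewrite eq_complex /=; apply/andP; split; apply/eqP; ring.
Qed.

Lemma Re_expiM (t : R) (w : C) :
  complex.Re (expi t * w) = cos t * complex.Re w - sin t * complex.Im w.
Proof. by case: w. Qed.

Lemma Im_expiM (t : R) (w : C) :
  complex.Im (expi t * w) = cos t * complex.Im w - sin t * - complex.Re w.
Proof. by case: w => a b /=; ring. Qed.

End ComplexModulus.

Section InnerProduct.
Local Open Scope complex_scope.
Variable R : realType.
Local Notation C := R[i].
Variables (H : lmodType C) (ip : H -> H -> C).
Hypothesis ip_inner : is_inner_product ip.

Lemma ipZDr x y z (a : C) : ip x (a *: y + z) = a * ip x y + ip x z.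
Proof. by case: ip_inner. Qed.

Lemma ipC x y : ip y x = conjc (ip x y).
Proof. by case: ip_inner. Qed.

Lemma ip0r x : ip x 0 = 0.
Proof.
have := ipZDr x 0 0 1; rewrite scaler0 addr0 mul1r => ip0D.
by apply: (@addrI _ (ip x 0)); rewrite addr0 -ip0D.
Qed.

Lemma ipBr x y z : ip x (y - z) = ip x y - ip x z.
Proof. by rewrite -scaleN1r addrC ipZDr mulN1r addrC. Qed.

Lemma ipZDl x y z (a : C) : ip (a *: y + z) x = conjc a * ip y x + ip z x.
Proof. by rewrite ipC ipZDr rmorphD rmorphM /= -!ipC. Qed.

Lemma ipZl x y (a : C) : ip (a *: x) y = conjc a * ip x y.
Proof. by rewrite -[a *: x]addr0 ipZDl (ipC y 0) ip0r conjc0 addr0. Qed.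

Lemma ipxx x : ip x x = complex.Re (ip x x) +i* 0.
Proof.
by case: ip_inner => _ _ /(_ x) [Im0 _] _; move: (ip x x) Im0 => [a b] /= ->.
Qed.

Lemma Re_ipxx_ge0 x : 0 <= complex.Re (ip x x).
Proof. by case: ip_inner => _ _ /(_ x) []. Qed.

Lemma Re_ipxx_eq0 x : complex.Re (ip x x) = 0 -> x = 0.
Proof. by case: ip_inner => _ _ _ ipxx0 Re0; apply: ipxx0; rewrite ipxx Re0. Qed.

Lemma cauchy_schwarz x y : cmod (ip x y) <= hnorm ip x * hnorm ip y.
Proof.
rewrite /hnorm; set a := complex.Re (ip x x); set b := complex.Re (ip y y).
have a0 : 0 <= a := Re_ipxx_ge0 x.
have [b0|bpos] := eqVneq b 0.
  rewrite (Re_ipxx_eq0 b0) ip0r /cmod /= expr0n /= addr0 sqrtr0.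
  by rewrite mulr_ge0 // sqrtr_ge0.
have b_gt0 : 0 < b by rewrite lt_neqAle eq_sym bpos Re_ipxx_ge0.
(* Positivity of <v, v> for v = x - t <x, y>^* y, taken at t = 1 / b. *)
have quad t : 0 <= t ^+ 2 * cmod (ip x y) ^+ 2 * b - 2 * t * cmod (ip x y) ^+ 2 + a.
  have := Re_ipxx_ge0 ((((- t) +i* 0) * conjc (ip x y)) *: y + x).
  rewrite ipZDl !ipZDr (ipC x y) (ipxx x) (ipxx y) -/a -/b cmod_sqr.
  by case: (ip x y) => p q /= ?; nra.
have := quad b^-1.
have -> : b^-1 ^+ 2 * cmod (ip x y) ^+ 2 * b - 2 * b^-1 * cmod (ip x y) ^+ 2 + a =
    a - cmod (ip x y) ^+ 2 / b by field; rewrite gt_eqF.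
rewrite subr_ge0 ler_pdivrMr // => hP.
rewrite -sqrtrM // -(ger0_norm (cmod_ge0 (ip x y))) -sqrtr_sqr.
exact: ler_wsqrtr hP.
Qed.

Lemma ip_iter_adjoint (T Tstar : H -> H) (e : H) (l : C) :
  is_adjoint ip T Tstar -> T e = l *: e ->
  forall (m : nat) (w : H), ip (iter m Tstar w) e = l ^+ m * ip w e.
Proof.
move=> adj Te m w; elim: m => [|m IH]; first by rewrite expr0 mul1r.
by rewrite iterS exprS -mulrA -IH ipC -adj Te ipZl rmorphM /= conjcK -ipC.
Qed.

Lemma holder_ip_mul_conj (D : set R) (e : R -> H) (M CE a : R) (x y : H) :
  (forall t, D t -> hnorm ip (e t) <= M) ->
  (forall t s, D t -> D s -> hnorm ip (e t - e s) <= CE * `|t - s| `^ a) ->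
  forall t s, D t -> D s ->
    cmod (ip x (e t) * conjc (ip y (e t)) - ip x (e s) * conjc (ip y (e s)))
      <= 2 * M * CE * hnorm ip x * hnorm ip y * `|t - s| `^ a.
Proof.
move=> eM eCE t s Dt Ds.
have ip_le z r : D r -> cmod (ip z (e r)) <= hnorm ip z * M.
  move=> Dr; apply: (le_trans (cauchy_schwarz _ _)).
  by apply: ler_wpM2l; [exact: sqrtr_ge0 | exact: eM].
have ipB_le z : cmod (ip z (e t) - ip z (e s)) <= hnorm ip z * (CE * `|t - s| `^ a).
  rewrite -ipBr; apply: (le_trans (cauchy_schwarz _ _)).
  by apply: ler_wpM2l; [exact: sqrtr_ge0 | exact: eCE].
have -> : ip x (e t) * conjc (ip y (e t)) - ip x (e s) * conjc (ip y (e s)) =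
    (ip x (e t) - ip x (e s)) * conjc (ip y (e t))
    + ip x (e s) * conjc (ip y (e t) - ip y (e s)).
  by rewrite rmorphB /=; ring.
apply: (le_trans (cmodD _ _)); rewrite !cmodM !cmodJ.
apply: le_trans (lerD (ler_pM (cmod_ge0 _) (cmod_ge0 _) (ipB_le x) (ip_le y t Dt))
  (ler_pM (cmod_ge0 _) (cmod_ge0 _) (ip_le x s Ds) (ipB_le y))) _.
by rewrite le_eqVlt; apply/orP; left; apply/eqP; ring.
Qed.

End InnerProduct.

Lemma eq_circle_integral (R : realType) (f g : R[i] -> R[i]) :
  (forall t, f (expi t) = g (expi t)) -> circle_integral f = circle_integral g.
Proof.
move=> fg; rewrite /circle_integral.
by congr (_ +i* _)%C; congr (_ * _); apply: eq_Rintegral => t _; rewrite fg.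
Qed.

Lemma cmod_circle_integral_expX_le (R : realType) (g : R[i] -> R[i]) (K a : R) (n : nat) :
  0 < a -> 0 <= K -> (0 < n)%N ->
  (forall t s, 0 <= t < 2 * pi -> 0 <= s < 2 * pi ->
    cmod (g (expi t) - g (expi s)) <= K * `|t - s| `^ a) ->
  cmod (circle_integral (fun l => l ^+ n * g l)) <= 4 * K * (2 * pi / n%:R) `^ a.
Proof.
move=> a0 K0 n0 gK.
have holder_part (f : R[i] -> R) : (forall z w, `|f z - f w| <= cmod (z - w)) ->
    holder_on `[0, 2 * pi[ (fun t => f (g (expi t))) K a.
  move=> fC t s; rewrite /= !in_itv /= => ht hs.
  exact: le_trans (fC _ _) (gK t s ht hs).
have Re_part : holder_on `[0, 2 * pi[ (fun t => complex.Re (g (expi t))) K a.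
  by apply: holder_part => [[p q] [p' q']]; exact: (normr_Re_le ((p - p') +i* (q - q'))%C).
have Im_part : holder_on `[0, 2 * pi[ (fun t => complex.Im (g (expi t))) K a.
  by apply: holder_part => [[p q] [p' q']]; exact: (normr_Im_le ((p - p') +i* (q - q'))%C).
have NRe_part : holder_on `[0, 2 * pi[ (fun t => - complex.Re (g (expi t))) K a.
  by move=> t s ht hs; rewrite -opprD normrN; exact: Re_part.
have pi2_gt0 : 0 < 2 * pi :> R by rewrite mulr_gt0 // pi_gt0.
rewrite /circle_integral.
under eq_Rintegral do rewrite expiX Re_expiM.
under [X in (_ +i* (_ * X))%C]eq_Rintegral do rewrite expiX Im_expiM.
apply: (le_trans (cmod_le_normD _ _)).
rewrite !normrM ger0_norm ?invr_ge0 ?(ltW pi2_gt0) //.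
suff -> : 4 * K * (2 * pi / n%:R) `^ a =
    (2 * pi)^-1 * (2 * K * (2 * pi) * (2 * pi / n%:R) `^ a) +
    (2 * pi)^-1 * (2 * K * (2 * pi) * (2 * pi / n%:R) `^ a).
  by apply: lerD; apply: ler_wpM2l; rewrite ?invr_ge0 ?(ltW pi2_gt0) //;
    exact: re_expi_mul_le.
(* [field] would unfold [pi] itself *)
set X := (2 * pi / n%:R) `^ a; move: pi2_gt0; set p := 2 * pi => p_gt0.
by field; rewrite gt_eqF.
Qed.

Theorem proposition2p9 (R : realType) (H : lmodType R[i]) (ip : H -> H -> R[i])
    (T Tstar : H -> H) (E : R[i] -> H) (alpha : R) (Rop : H -> H) :
  separable_inf_dim_hilbert ip ->
  bounded_linear ip T ->
  is_adjoint ip T Tstar ->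
  T_eigenvector_field ip T E ->
  0 < alpha <= 1 ->
  holderian ip E alpha ->
  is_KKstar ip E Rop ->
  exists CEa : R, 0 < CEa /\
    forall (x y : H) (n : nat), (0 < n)%N ->
      cmod (ip (Rop (iter n Tstar x)) y)
        <= CEa * hnorm ip x * hnorm ip y / (n%:R `^ alpha).
Proof.
move=> [ip_inner _ _ _] _ adj [[M E_le] E_eigen] /andP[alpha_gt0 _] [CE [CE_gt0 E_holder]]
  [_ RopE].
pose Mp := `|M| + 1.
have Mp_gt0 : 0 < Mp by rewrite ltr_wpDl.
have E_le_Mp l : unit_circle l -> hnorm ip (E l) <= Mp.
  by move=> /E_le /le_trans; apply; rewrite (le_trans (ler_norm M)) // lerDl.
have pi2_gt0 : 0 < 2 * pi :> R by rewrite mulr_gt0 // pi_gt0.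
exists (8 * Mp * CE * (2 * pi) `^ alpha); split; first by rewrite !mulr_gt0 // powR_gt0.
move=> x y n n_gt0.
have n_gt0' : 0 < n%:R :> R by rewrite ltr0n.
pose G l := ip x (E l) * conjc (ip y (E l)).
have -> : ip (Rop (iter n Tstar x)) y = circle_integral (fun l => l ^+ n * G l).
  rewrite RopE; apply: eq_circle_integral => t.
  by rewrite (ip_iter_adjoint ip_inner adj (E_eigen _ (expi_unit_circle t))) mulrA.
apply: le_trans (cmod_circle_integral_expX_le (K := 2 * Mp * CE * hnorm ip x * hnorm ip y)
  alpha_gt0 _ n_gt0 _) _.
- by rewrite !mulr_ge0 ?sqrtr_ge0 // ltW.
- move=> t s ht hs.
  apply: (holder_ip_mul_conj ip_inner x y (e := fun r => E (expi r)) _ E_holder ht hs).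
  by move=> r _; exact: E_le_Mp (expi_unit_circle r).
rewrite powRM ?invr_ge0 ?(ltW pi2_gt0) ?(ltW n_gt0') //.
rewrite -powR_inv1 ?(ltW n_gt0') // powRAC powR_inv1 ?powR_ge0 //.
by rewrite le_eqVlt; apply/orP; left; apply/eqP; field; rewrite gt_eqF ?powR_gt0.
Qed.
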